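(* Let $u,v\in F$ and let $\varphi$ be an endomorphism of $F$ such that $(u,v)\sim_{AC}(\varphi(u),\varphi(v))$. Then for all $u',v'\in F$, if $(u,v)\sim_{AC}(u',v')$ then $(u',v')\sim_{AC}(\varphi(u'),\varphi(v'))$.
   Context: $F=F(x,y)$ is the free group on $\{x,y\}$. The Andrews–Curtis (AC) moves on a pair $(r_1,r_2)\in F^2$ are: replace $r_i$ by $r_ir_j$ ($i\ne j$); replace $r_i$ by $r_i^{-1}$; replace $r_i$ by $w^{-1}r_iw$ for some $w\in F$. Two pairs are AC-equivalent, written $\sim_{AC}$, if one can be obtained from the other by a finite sequence of AC-moves. *)

(* The free group F = F(x,y) on two generators is
   modelled concretely as the set of freely reduced words over the alphabet
   {x, x^-1, y, y^-1}, with multiplication = concatenation followed by free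
   reduction. *)
From Stdlib Require Import Relation_Operators.
From mathcomp Require Import all_boot.
Set Implicit Arguments. Unset Strict Implicit. Unset Printing Implicit Defensive.

(* a letter (g, s): g = false means generator x, g = true means y;
   s = false means the generator itself, s = true means its inverse *)
Definition letter := (bool * bool)%type.
Definition inv_letter (a : letter) : letter := (a.1, ~~ a.2).

Fixpoint reduced (w : seq letter) : bool :=
  match w with
  | a :: ((b :: _) as w') => (b != inv_letter a) && reduced w'
  | _ => true
  end.

Definition reduce_cons (a : letter) (w : seq letter) : seq letter :=
  match w with
  | b :: w' => if b == inv_letter a then w' else a :: w
  | [::] => [:: a]
  end.

Definition reduce (w : seq letter) : seq letter := foldr reduce_cons [::] w.

Lemma reduced_reduce_cons a w : reduced w -> reduced (reduce_cons a w).
Proof.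
case: w => [|b w] //= H.
case: ifP => Hb.
  by case: w H => [|c w] //= /andP[].
by rewrite /= H Hb.
Qed.

Lemma reduced_reduce w : reduced (reduce w).
Proof. by elim: w => [|a w IH] //=; apply: reduced_reduce_cons. Qed.

Definition F := {w : seq letter | reduced w}.

Definition fone : F := exist _ [::] erefl.
Definition fmul (a b : F) : F :=
  exist _ (reduce (sval a ++ sval b)) (reduced_reduce _).
Definition finv (a : F) : F :=
  exist _ (reduce (map inv_letter (rev (sval a)))) (reduced_reduce _).

Definition gx : F := exist _ [:: (false, false)] erefl.
Definition gy : F := exist _ [:: (true, false)] erefl.

Definition is_endo (phi : F -> F) : Prop :=
  forall a b, phi (fmul a b) = fmul (phi a) (phi b).

Inductive ac_move : F * F -> F * F -> Prop :=
  | ac_mul12 r1 r2 : ac_move (r1, r2) (fmul r1 r2, r2)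
  | ac_mul21 r1 r2 : ac_move (r1, r2) (r1, fmul r2 r1)
  | ac_inv1 r1 r2 : ac_move (r1, r2) (finv r1, r2)
  | ac_inv2 r1 r2 : ac_move (r1, r2) (r1, finv r2)
  | ac_conj1 w r1 r2 : ac_move (r1, r2) (fmul (finv w) (fmul r1 w), r2)
  | ac_conj2 w r1 r2 : ac_move (r1, r2) (r1, fmul (finv w) (fmul r2 w)).

Definition ac_equiv (p q : F * F) : Prop := clos_refl_trans _ ac_move p q.

From Pilot Require Import Defs.
From Stdlib Require Import Relation_Operators.
From mathcomp Require Import all_boot.

Set Implicit Arguments.
Unset Strict Implicit.

(* AC-moves are invertible, so AC-equivalence is symmetric, and an endomorphism
   sends every AC-move to an AC-move of the same kind.  Hence from
   (u, v) ~ (u', v') we get (u', v') ~ (u, v) ~ (phi u, phi v) ~ (phi u', phi v'). *)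

(* [reduce_onto w r] is the free reduction of [w ++ r] when [r] is reduced. *)
Definition reduce_onto (w r : seq letter) := foldr reduce_cons r w.

Lemma inv_letterK : involutive inv_letter.
Proof. by case=> g s; rewrite /inv_letter /= negbK. Qed.

Lemma reduced_behead a w : reduced (a :: w) -> reduced w.
Proof. by case: w => [|b w] //= /andP[]. Qed.

Lemma reduced_reduce_onto w r : reduced r -> reduced (reduce_onto w r).
Proof. by elim: w => [|a w IH] //= Hr; apply/reduced_reduce_cons/IH. Qed.

Lemma reduce_consK a t :
  reduced t -> reduce_cons a (reduce_cons (inv_letter a) t) = t.
Proof.
case: t => [|c t] /=; first by rewrite eqxx.
case: ifP => [/eqP|_ _]; last by rewrite /= eqxx.
rewrite inv_letterK => ->.
by case: t => [|d t] //= /andP[/negbTE ->].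
Qed.

Lemma reduce_onto_cons a s r : reduced r ->
  reduce_onto (reduce_cons a s) r = reduce_cons a (reduce_onto s r).
Proof.
move=> Hr; case: s => [|b s] //=.
case: ifP => [/eqP ->|] //=.
by rewrite reduce_consK // reduced_reduce_onto.
Qed.

Lemma reduce_onto_reduce w r : reduced r ->
  reduce_onto (reduce w) r = reduce_onto w r.
Proof.
by move=> Hr; elim: w => [|a w IH] //=; rewrite reduce_onto_cons // IH.
Qed.

Lemma reduce_id r : reduced r -> reduce r = r.
Proof.
elim: r => [|a r IH] //= H.
rewrite IH; last exact: reduced_behead H.
by case: r H {IH} => [|b r] //= /andP[/negbTE ->].
Qed.

Lemma reduce_cat w1 w2 : reduce (w1 ++ w2) = reduce_onto w1 (reduce w2).
Proof. exact: foldr_cat. Qed.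

Lemma reduce_onto_invK w r : reduced r ->
  reduce_onto (map inv_letter (rev w)) (reduce_onto w r) = r.
Proof.
move=> Hr; elim: w => [|b w IH] //=.
rewrite rev_cons map_rcons -cats1 /reduce_onto foldr_cat /=.
have := reduce_consK (inv_letter b) (reduced_reduce_onto w Hr).
by rewrite inv_letterK => ->.
Qed.

Lemma fmulA a b c : fmul a (fmul b c) = fmul (fmul a b) c.
Proof.
apply: val_inj; case: a b c => [a Ha] [b Hb] [c Hc] /=.
rewrite !reduce_cat (reduce_id Hc) (reduce_id Hb).
rewrite (reduce_id (reduced_reduce_onto _ Hc)).
have -> : reduce_onto a b = reduce (a ++ b) by rewrite reduce_cat reduce_id.
by rewrite reduce_onto_reduce // /reduce_onto foldr_cat.
Qed.

Lemma fmul1g a : fmul fone a = a.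
Proof. by apply: val_inj; case: a => a Ha /=; rewrite reduce_id. Qed.

Lemma fmulg1 a : fmul a fone = a.
Proof. by apply: val_inj; case: a => a Ha /=; rewrite cats0 reduce_id. Qed.

Lemma fmulVg a : fmul (Defs.finv a) a = fone.
Proof.
apply: val_inj; case: a => a Ha /=.
rewrite reduce_cat reduce_onto_reduce ?reduced_reduce // reduce_id //.
have := reduce_onto_invK a (erefl : reduced [::]).
by rewrite -(reduce_cat a [::]) cats0 reduce_id.
Qed.

Lemma fmulgV a : fmul a (Defs.finv a) = fone.
Proof.
apply: val_inj; case: a => a Ha /=.
rewrite reduce_cat (reduce_id (reduced_reduce _)).
have := reduce_onto_invK (map inv_letter (rev a)) (erefl : reduced [::]).
by rewrite -map_rev revK -map_comp (eq_map inv_letterK) map_id.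
Qed.

Lemma finvK : involutive Defs.finv.
Proof. by move=> a; rewrite -[LHS]fmulg1 -(fmulVg a) fmulA fmulVg fmul1g. Qed.

Lemma fmulKV a b : fmul (fmul a b) (Defs.finv b) = a.
Proof. by rewrite -fmulA fmulgV fmulg1. Qed.

Lemma ac_move_sym p q : ac_move p q -> ac_equiv q p.
Proof.
case=> [r1 r2|r1 r2|r1 r2|r1 r2|w r1 r2|w r1 r2].
- apply: rt_trans (rt_step _ _ _ _ (ac_inv2 _ _)) _.
  apply: rt_trans (rt_step _ _ _ _ (ac_mul12 _ _)) _.
  by rewrite fmulKV -{2}(finvK r2); apply/rt_step/ac_inv2.
- apply: rt_trans (rt_step _ _ _ _ (ac_inv1 _ _)) _.
  apply: rt_trans (rt_step _ _ _ _ (ac_mul21 _ _)) _.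
  by rewrite fmulKV -{2}(finvK r1); apply/rt_step/ac_inv1.
- by rewrite -{2}(finvK r1); apply/rt_step/ac_inv1.
- by rewrite -{2}(finvK r2); apply/rt_step/ac_inv2.
- have := rt_step _ _ _ _ (ac_conj1 (Defs.finv w) (fmul (Defs.finv w) (fmul r1 w)) r2).
  by rewrite finvK !fmulA fmulgV fmul1g -!fmulA fmulgV fmulg1.
- have := rt_step _ _ _ _ (ac_conj2 (Defs.finv w) r1 (fmul (Defs.finv w) (fmul r2 w))).
  by rewrite finvK !fmulA fmulgV fmul1g -!fmulA fmulgV fmulg1.
Qed.

Lemma ac_equiv_sym p q : ac_equiv p q -> ac_equiv q p.
Proof.
elim=> [x y /ac_move_sym //|x|x y z _ Hxy _ Hyz]; first exact: rt_refl.
exact: rt_trans Hyz Hxy.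
Qed.

Section Endomorphism.
Variable phi : F -> F.
Hypothesis phiM : is_endo phi.

Lemma endo1 : phi fone = fone.
Proof.
have := congr1 (fmul (Defs.finv (phi fone))) (phiM fone fone).
by rewrite fmul1g fmulA fmulVg fmul1g => <-.
Qed.

Lemma endoV a : phi (Defs.finv a) = Defs.finv (phi a).
Proof.
have := phiM (Defs.finv a) a; rewrite fmulVg endo1 => E.
by rewrite -[LHS]fmulg1 -(fmulgV (phi a)) fmulA -E fmul1g.
Qed.

Lemma ac_equiv_endo p q : ac_equiv p q ->
  ac_equiv (phi p.1, phi p.2) (phi q.1, phi q.2).
Proof.
elim=> [x y Hxy|x|x y z _ Hxy _ Hyz]; last 2 first.
- exact: rt_refl.
- exact: rt_trans Hxy Hyz.
by case: Hxy => * /=; rewrite ?phiM ?endoV; apply/rt_step; constructor.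
Qed.

End Endomorphism.

Theorem lemma3 (u v : F) (phi : F -> F) :
  is_endo phi ->
  ac_equiv (u, v) (phi u, phi v) ->
  forall u' v' : F, ac_equiv (u, v) (u', v') -> ac_equiv (u', v') (phi u', phi v').
Proof.
move=> phiM uv_phi u' v' uv_u'v'.
apply: rt_trans (ac_equiv_sym uv_u'v') _.
apply: rt_trans uv_phi _.
exact: (ac_equiv_endo phiM uv_u'v').
Qed.
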